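(* Let $P$ be a finite poset, $R$ a commutative unital ring, and $D$ a derivation of $I^3(P,R)$. Then for all $x<y$ in $P$, $$D(e_{xyy})=\sum_{v\in P,\ y<v}D(e_y)(y,y,v)\,e_{xyv}+\sum_{u\in P,\ u\le y}D(e_{xyy})(u,y,y)\,e_{uyy},$$ $$D(e_{xxy})=\sum_{v\in P,\ x\le v}D(e_{xxy})(x,x,v)\,e_{xxv}+\sum_{u\in P,\ u<x}D(e_x)(u,x,x)\,e_{uxy}.$$
   Context: For a finite poset $P$, $P^3_\le=\{(x,y,z)\in P^3: x\le y\le z\}$, and $I^3(P,R)$ is the $R$-module of functions $f:P^3_\le\to R$ with multiplication $(fg)(x_1,x_2,x_3)=\sum f(x_1,y_1,y_2)g(y_1,y_2,x_3)$ over all $x_1\le y_1\le x_2\le y_2\le x_3$. For $x\le y\le z$, $e_{xyz}$ is the function equal to $1$ at $(x,y,z)$ and $0$ elsewhere, and $e_x:=e_{xxx}$. A derivation is an $R$-linear map $D:I^3(P,R)\to I^3(P,R)$ with $D(fg)=D(f)g+fD(g)$. *)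

From HB Require Import structures.
From mathcomp Require Import all_boot all_order all_algebra.
Set Implicit Arguments. Unset Strict Implicit. Unset Printing Implicit Defensive.
Import Order.TTheory GRing.Theory.
Local Open Scope ring_scope.

(* Elements of I^3(P,R) are represented as finite functions on P*P*P that
   vanish outside P^3_<= = {(x,y,z) | x <= y <= z}. *)
Notation fun3 P R := {ffun P * P * P -> R}.

Definition inI3 d (P : finPOrderType d) (R : comPzRingType) (f : fun3 P R) : Prop :=
  forall x y z : P, ~~ ((x <= y)%O && (y <= z)%O) -> f (x, y, z) = 0.

Definition mul3 d (P : finPOrderType d) (R : comPzRingType) (f g : fun3 P R)
  : fun3 P R :=
  [ffun t : P * P * P =>
     let: (x1, x2, x3) := t in
     \sum_(y1 : P) \sum_(y2 : P)
       if [&& (x1 <= y1)%O, (y1 <= x2)%O, (x2 <= y2)%O & (y2 <= x3)%O]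
       then f (x1, y1, y2) * g (y1, y2, x3) else 0].

Definition scale3 d (P : finPOrderType d) (R : comPzRingType) (a : R)
  (f : fun3 P R) : fun3 P R := [ffun t => a * f t].

Definition e3 d (P : finPOrderType d) (R : comPzRingType) (x y z : P) : fun3 P R :=
  [ffun t => if t == (x, y, z) then 1 else 0].

Definition is_derivation3 d (P : finPOrderType d) (R : comPzRingType)
  (D : fun3 P R -> fun3 P R) : Prop :=
  [/\ forall f : fun3 P R, inI3 f -> inI3 (D f),
      forall f g : fun3 P R, inI3 f -> inI3 g -> D (f + g) = D f + D g,
      forall (a : R) (f : fun3 P R), inI3 f -> D (scale3 a f) = scale3 a (D f)
    & forall f g : fun3 P R, inI3 f -> inI3 g ->
        D (mul3 f g) = mul3 (D f) g + mul3 f (D g)].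

From HB Require Import structures.
From mathcomp Require Import all_boot all_order all_algebra.
Import Order.TTheory GRing.Theory.
Local Open Scope ring_scope.

(* Since e_{xyy} = e_{xyy} e_y and e_{xxy} = e_x e_{xxy}, the Leibniz rule
   reduces both identities to products f e_{aab} and e_{abb} g with an
   arbitrary f, g, and these are read off explicitly: f e_{aab} collects the
   entries f(u,a,a) along the e_{uab}, and e_{abb} g the entries g(b,b,v)
   along the e_{abv}.  The same computation applied to e_a = e_a e_a gives
   D(e_a)(a,a,a) = 2 D(e_a)(a,a,a), which kills the diagonal term. *)

Section TripleIncidence.
Variables (d : Order.disp_t) (P : finPOrderType d) (R : comPzRingType).
Implicit Types (f g : fun3 P R) (a b c : P).

Lemma sum_pair1 (F : P -> P -> R) a0 b0 :
  (forall a b, (a, b) != (a0, b0) -> F a b = 0) ->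
  \sum_a \sum_b F a b = F a0 b0.
Proof.
move=> F0; rewrite pair_bigA (bigD1 (a0, b0)) //= big1 ?addr0 //.
by move=> [a b]; apply: F0.
Qed.

Lemma scale3_0 f : scale3 0 f = 0.
Proof. by apply/ffunP => t; rewrite !ffunE mul0r. Qed.

Lemma scale3_1 f : scale3 1 f = f.
Proof. by apply/ffunP => t; rewrite !ffunE mul1r. Qed.

Lemma inI3_e3 {a b c} : (a <= b)%O -> (b <= c)%O -> inI3 (e3 R a b c).
Proof. by move=> ab bc x y z; rewrite ffunE; case: eqP => // -[-> -> ->]; rewrite ab bc. Qed.

Lemma sum_scale3_e3_first (p : pred P) (k : P -> R) b c x y z :
  (\sum_(u | p u) scale3 (k u) (e3 R u b c)) (x, y, z) =
  if p x then k x * e3 R x b c (x, y, z) else 0.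
Proof.
rewrite sum_ffunE big_mkcond (bigD1 x) //= ffunE big1 ?addr0 // => u ux.
by case: ifP => // _; rewrite !ffunE !xpair_eqE /= [x == u]eq_sym (negbTE ux) mulr0.
Qed.

Lemma sum_scale3_e3_last (p : pred P) (k : P -> R) a b x y z :
  (\sum_(v | p v) scale3 (k v) (e3 R a b v)) (x, y, z) =
  if p z then k z * e3 R a b z (x, y, z) else 0.
Proof.
rewrite sum_ffunE big_mkcond (bigD1 z) //= ffunE big1 ?addr0 // => v vz.
by case: ifP => // _; rewrite !ffunE xpair_eqE /= [z == v]eq_sym (negbTE vz) andbF mulr0.
Qed.

Lemma mul3_e3r f a b : (a <= b)%O ->
  mul3 f (e3 R a a b) = \sum_(u | (u <= a)%O) scale3 (f (u, a, a)) (e3 R u a b).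
Proof.
move=> ab; apply/ffunP => -[[x1 x2] x3]; rewrite ffunE /= (sum_pair1 _ a a); last first.
  move=> u v uv; case: ifP => // _; rewrite ffunE; case: eqP => [[eu ev _]|_].
    by rewrite eu ev eqxx in uv.
  by rewrite mulr0.
rewrite sum_scale3_e3_first !ffunE !xpair_eqE !eqxx /= (andbA (a <= x2)%O) -eq_le.
case: (x2 =P a) => [->|/eqP x2a].
  by rewrite eqxx /=; case: eqP => [->|_]; rewrite ?ab ?andbT // !mulr0 !if_same.
by rewrite [a == x2]eq_sym (negbTE x2a) /= andbF mulr0 if_same.
Qed.

Lemma mul3_e3l g a b : (a <= b)%O ->
  mul3 (e3 R a b b) g = \sum_(v | (b <= v)%O) scale3 (g (b, b, v)) (e3 R a b v).
Proof.
move=> ab; apply/ffunP => -[[x1 x2] x3]; rewrite ffunE /= (sum_pair1 _ b b); last first.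
  move=> u v uv; case: ifP => // _; rewrite ffunE; case: eqP => [[_ eu ev]|_].
    by rewrite eu ev eqxx in uv.
  by rewrite mul0r.
rewrite sum_scale3_e3_last !ffunE !xpair_eqE !eqxx /= (andbA (b <= x2)%O) -eq_le.
case: (x2 =P b) => [->|/eqP x2b]; rewrite !andbT.
  by rewrite eqxx /=; case: eqP => [->|_]; rewrite ?ab ?mul1r ?mulr1 // mul0r mulr0 !if_same.
by rewrite [b == x2]eq_sym (negbTE x2b) /= !andbF mulr0 if_same.
Qed.

Lemma mul3_e3_idr {a b} : (a <= b)%O -> mul3 (e3 R a b b) (e3 R b b b) = e3 R a b b.
Proof.
move=> ab; rewrite mul3_e3l // (bigD1 b) //= big1 ?addr0 => [|v /andP[_ vb]].
  by rewrite ffunE eqxx scale3_1.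
by rewrite ffunE xpair_eqE /= (negbTE vb) andbF scale3_0.
Qed.

Lemma mul3_e3_idl {a b} : (a <= b)%O -> mul3 (e3 R a a a) (e3 R a a b) = e3 R a a b.
Proof.
move=> ab; rewrite mul3_e3r // (bigD1 a) //= big1 ?addr0 => [|u /andP[_ ua]].
  by rewrite ffunE eqxx scale3_1.
by rewrite ffunE !xpair_eqE /= (negbTE ua) scale3_0.
Qed.

Variable D : fun3 P R -> fun3 P R.
Hypothesis D_der : is_derivation3 D.

Lemma derivation3_e3_diag a : D (e3 R a a a) (a, a, a) = 0.
Proof.
have [_ _ _ DM] := D_der; have ea := inI3_e3 (lexx a) (lexx a).
have := congr1 (fun h : fun3 P R => h (a, a, a)) (DM _ _ ea ea).
rewrite /= mul3_e3_idl // ffunE mul3_e3r // mul3_e3l //.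
rewrite sum_scale3_e3_first sum_scale3_e3_last lexx ffunE eqxx mulr1.
by set c := D _ _ => cc; apply: (addrI c); rewrite addr0 -cc.
Qed.

Lemma derivation3_e3_xyy x y : (x <= y)%O ->
  D (e3 R x y y) =
    \sum_(v | (y < v)%O) scale3 (D (e3 R y y y) (y, y, v)) (e3 R x y v)
    + \sum_(u | (u <= y)%O) scale3 (D (e3 R x y y) (u, y, y)) (e3 R u y y).
Proof.
move=> xy; have [_ _ _ DM] := D_der.
have exyy := inI3_e3 xy (lexx y); have ey := inI3_e3 (lexx y) (lexx y).
rewrite -{1}(mul3_e3_idr xy) (DM _ _ exyy ey) mul3_e3r // mul3_e3l // addrC.
rewrite (bigD1 y) //= derivation3_e3_diag scale3_0 add0r.
by congr (_ + _); apply: eq_bigl => v; rewrite lt_def andbC.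
Qed.

Lemma derivation3_e3_xxy x y : (x <= y)%O ->
  D (e3 R x x y) =
    \sum_(v | (x <= v)%O) scale3 (D (e3 R x x y) (x, x, v)) (e3 R x x v)
    + \sum_(u | (u < x)%O) scale3 (D (e3 R x x x) (u, x, x)) (e3 R u x y).
Proof.
move=> xy; have [_ _ _ DM] := D_der.
have ex := inI3_e3 (lexx x) (lexx x); have exxy := inI3_e3 (lexx x) xy.
rewrite -{1}(mul3_e3_idl xy) (DM _ _ ex exxy) mul3_e3r // mul3_e3l // addrC.
rewrite [X in _ + X](bigD1 x) //= derivation3_e3_diag scale3_0 add0r.
by congr (_ + _); apply: eq_bigl => u; rewrite lt_def andbC eq_sym.
Qed.

End TripleIncidence.

Theorem lemma4p2 (d : Order.disp_t) (P : finPOrderType d) (R : comPzRingType)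
  (D : fun3 P R -> fun3 P R) :
  is_derivation3 D ->
  forall x y : P, (x < y)%O ->
    D (e3 R x y y) =
      \sum_(v : P | (y < v)%O) scale3 (D (e3 R y y y) (y, y, v)) (e3 R x y v)
      + \sum_(u : P | (u <= y)%O) scale3 (D (e3 R x y y) (u, y, y)) (e3 R u y y)
    /\
    D (e3 R x x y) =
      \sum_(v : P | (x <= v)%O) scale3 (D (e3 R x x y) (x, x, v)) (e3 R x x v)
      + \sum_(u : P | (u < x)%O) scale3 (D (e3 R x x x) (u, x, x)) (e3 R u x y).
Proof.
move=> D_der x y /ltW xy.
by split; [apply: derivation3_e3_xyy | apply: derivation3_e3_xxy].
Qed.
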